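(* Let $(G,\rho)$ be a ribbon graph with a vertex $v$. Let $e_1\neq e_2$ be two edges incident to $v$ lying in the same $v$-component, and let $w_1,w_2$ be their other endpoints respectively. Then there exists a spanning tree $T$ of $G$ such that (i) $e_1\in T$, (ii) $e_2\notin T$, and (iii) the path in $T$ from $w_2$ to $v$ passes through $w_1$.
   Context: Graphs are finite, connected, loopless, possibly with multiple edges. A ribbon graph assigns to each vertex a cyclic order on its incident edges. For a vertex $v$, a $v$-component of $(G,\rho)$ is the full ribbon subgraph induced on the vertex set of a connected component of $G\setminus v$ together with $v$. *)

From mathcomp Require Import all_boot all_fingroup.
Set Implicit Arguments. Unset Strict Implicit. Unset Printing Implicit Defensive.

Section Graphs.
Variables (V E : finType) (src tgt : E -> V).

Definition loopless := forall e, src e != tgt e.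

Definition incident (e : E) (x : V) : bool := (src e == x) || (tgt e == x).

(* the endpoint of e other than x (meaningful when e is incident to x) *)
Definition other_end (e : E) (x : V) : V := if src e == x then tgt e else src e.

Definition adj_in (F : {set E}) : rel V :=
  fun x y => [exists e in F, ((src e == x) && (tgt e == y)) ||
                             ((src e == y) && (tgt e == x))].

Definition sconnected (F : {set E}) : Prop := forall x y : V, connect (adj_in F) x y.

Definition gconnected : Prop := sconnected [set: E].

Definition spanning_tree (T : {set E}) : Prop :=
  sconnected T /\ forall e, e \in T -> ~ sconnected (T :\ e).

Definition adj_minus (v : V) : rel V :=
  fun x y => [&& x != v, y != v & adj_in [set: E] x y].

(* e1 and e2 (incident to v) lie in the same v-component: their other
   endpoints lie in the same connected component of G \ v *)
Definition same_v_component (v : V) (e1 e2 : E) : bool :=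
  [&& incident e1 v, incident e2 v &
      connect (adj_minus v) (other_end e1 v) (other_end e2 v)].

(* a path (no repeated vertex) in the subgraph T from x to y, given by its
   vertex sequence x :: p *)
Definition tpath (T : {set E}) (x y : V) (p : seq V) : bool :=
  [&& path (adj_in T) x p, last x p == y & uniq (x :: p)].

(* ribbon structure: for every vertex x a cyclic order on the edges
   incident to x, encoded as a permutation of E that fixes the
   non-incident edges and acts as a single cycle on the incident ones *)
Definition ribbon_structure (rho : V -> {perm E}) : Prop :=
  forall x : V,
    (forall e, ~~ incident e x -> rho x e = e) /\
    (forall e f, incident e x -> incident f x -> fconnect (rho x) e f).

End Graphs.

From mathcomp Require Import all_boot all_fingroup.
Set Implicit Arguments. Unset Strict Implicit. Unset Printing Implicit Defensive.

(* Let T1 be a maximal forest of G - v; it joins w1 and w2 because they lie in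
   the same v-component, and v is isolated in it, so T1 + e1 is still a
   forest.  Extend T1 + e1 to a maximal forest T avoiding e2.  T spans G, as
   the endpoints of e2 are joined by v - e1 - w1 - T1 - w2.  Since T1 lies in
   T - e1, the vertices w1 and w2 stay joined there; so a T-path from w2 to v
   missing w1 would miss e1 and join v to w1 in T - e1, making e1 lie on a
   cycle of T. *)

Section Forests.
Variables (V E : finType) (src tgt : E -> V).
Implicit Types (F G H T : {set E}) (e f g : E) (a b v w x y : V).

Local Notation adj F := (adj_in src tgt F).
Local Notation incident := (incident src tgt).
Local Notation other_end := (other_end src tgt).

Definition forest (F : {set E}) : bool :=
  [forall e in F, ~~ connect (adj (F :\ e)) (src e) (tgt e)].

Lemma adj_inP F x y :
  reflect (exists2 e, e \in F &
             ((src e == x) && (tgt e == y)) || ((src e == y) && (tgt e == x)))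
          (adj F x y).
Proof. by apply: (iffP existsP) => [[e /andP[]] | [e]]; exists e => //; apply/andP. Qed.

Lemma adj_in_sym F : symmetric (adj F).
Proof. by move=> x y; apply/adj_inP/adj_inP => -[e eF exy]; exists e; rewrite // orbC. Qed.

Lemma connect_adj_in_sym F : connect_sym (adj F).
Proof. exact/sym_connect_sym/adj_in_sym. Qed.

Lemma connect_adj_in_edge F e : e \in F -> connect (adj F) (src e) (tgt e).
Proof. by move=> eF; apply/connect1/adj_inP; exists e; rewrite ?eqxx. Qed.

Lemma connect_adj_in_sub F G :
  (forall e, e \in F -> connect (adj G) (src e) (tgt e)) ->
  forall x y, connect (adj F) x y -> connect (adj G) x y.
Proof.
move=> FG; apply: connect_sub => x y /adj_inP[e eF /orP[] /andP[/eqP <- /eqP <-]].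
  exact: FG.
by rewrite connect_adj_in_sym; apply: FG.
Qed.

Lemma connect_adj_in_subset F G x y :
  F \subset G -> connect (adj F) x y -> connect (adj G) x y.
Proof. by move=> /subsetP FG; apply: connect_adj_in_sub => e /FG /connect_adj_in_edge. Qed.

Lemma connect_adj_in_setU1 F f a b :
  connect (adj (f |: F)) a b ->
  [\/ connect (adj F) a b,
      connect (adj F) a (src f) && connect (adj F) (tgt f) b |
      connect (adj F) a (tgt f) && connect (adj F) (src f) b].
Proof.
have C_sym := connect_adj_in_sym F; have C_trans := @connect_trans _ (adj F).
move=> /connectP[p]; elim: p a => [|x p IHp] a /=; first by move=> _ ->; constructor 1.
case/andP=> /adj_inP[g] /setU1P[-> | gF] agx xp /(IHp _ xp).
  case/orP: agx => /andP[/eqP <- /eqP <-] [xb | /andP[xs sb] | /andP[xt tb]].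
  - by constructor 2; rewrite connect0.
  - by constructor 1; rewrite C_sym in xs; apply: C_trans xs sb.
  - by constructor 1.
  - by constructor 3; rewrite connect0.
  - by constructor 1.
  - by constructor 1; rewrite C_sym in xt; apply: C_trans xt tb.
have ax : connect (adj F) a x by apply/connect1/adj_inP; exists g.
case=> [xb | /andP[xs tb] | /andP[xt sb]].
- by constructor 1; apply: C_trans ax xb.
- by constructor 2; rewrite (C_trans _ _ _ ax xs).
- by constructor 3; rewrite (C_trans _ _ _ ax xt).
Qed.

Lemma connect_adj_in_exchange F e f :
  connect (adj (f |: F)) (src e) (tgt e) -> ~~ connect (adj F) (src e) (tgt e) ->
  connect (adj (e |: F)) (src f) (tgt f).
Proof.
have lift x y := @connect_adj_in_subset F (e |: F) x y (subsetUr _ _).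
have Ce : connect (adj (e |: F)) (src e) (tgt e) by rewrite connect_adj_in_edge ?setU11.
have C_sym := connect_adj_in_sym (e |: F); have C_trans := @connect_trans _ (adj (e |: F)).
case/connect_adj_in_setU1 => [-> // | /andP[/lift es /lift ft] | /andP[/lift et /lift fs]] _.
  by rewrite C_sym in es; apply: C_trans es (C_trans _ _ _ Ce _); rewrite C_sym.
by rewrite C_sym in Ce; apply: C_trans fs (C_trans _ _ _ Ce et).
Qed.

Lemma forest0 : forest set0.
Proof. by apply/forall_inP => e; rewrite inE. Qed.

Lemma forest_setU1 F f :
  forest F -> ~~ connect (adj F) (src f) (tgt f) -> forest (f |: F).
Proof.
move=> /forall_inP forestF nCf; apply/forall_inP => e /setU1P[-> | eF].
  apply: contra nCf; apply: connect_adj_in_subset.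
  by apply/subsetP => g; rewrite !inE => /andP[/negbTE ->].
apply: contra nCf => Ce; rewrite -(setD1K eF).
apply: connect_adj_in_exchange (forestF e eF).
apply: connect_adj_in_subset Ce.
by apply/subsetP => g; rewrite !inE => /andP[-> /orP[] ->]; rewrite ?orbT.
Qed.

Lemma forest_maximal_extension F0 H :
  forest F0 -> F0 \subset H ->
  exists T, [/\ forest T, F0 \subset T, T \subset H &
                forall f, f \in H -> connect (adj T) (src f) (tgt f)].
Proof.
move=> forestF0 F0H.
pose P F := [&& forest F, F0 \subset F & F \subset H].
have /(arg_maxnP (fun F : {set E} => #|F|)) : P F0 by rewrite /P forestF0 subxx.
case=> T /and3P[forestT F0T TH] maxT; exists T; split=> // f fH.
apply/contraT => nCf.
have fT : f \notin T by apply: contra nCf => /connect_adj_in_edge.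
suff /maxT : P (f |: T) by rewrite /= cardsU1 fT add1n ltnn.
rewrite /P forest_setU1 // (subset_trans F0T (subsetUr _ _)).
by rewrite subUset sub1set fH.
Qed.

Lemma forest_spanning_tree T :
  forest T -> sconnected src tgt T -> spanning_tree src tgt T.
Proof.
move=> /forall_inP forestT connT; split=> // e eT connTe.
by move/negP: (forestT e eT); apply; apply: connTe.
Qed.

Lemma sconnected_edges T :
  gconnected src tgt -> (forall e, connect (adj T) (src e) (tgt e)) ->
  sconnected src tgt T.
Proof. by move=> connG Te x y; apply: connect_adj_in_sub (connG x y) => e _. Qed.

Lemma connect_adj_minus v x y :
  connect (adj_minus src tgt v) x y ->
  connect (adj [set e | ~~ incident e v]) x y.
Proof.
apply: connect_sub => {}x {}y /and3P[xv yv /adj_inP[e _ exy]].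
apply/connect1/adj_inP; exists e => //; rewrite inE /incident negb_or.
by case/orP: exy => /andP[/eqP -> /eqP ->]; rewrite ?xv ?yv.
Qed.

Lemma incident_other_end e x : incident e (other_end e x).
Proof. by rewrite /incident /other_end; case: ifP; rewrite eqxx ?orbT. Qed.

Lemma other_end_neq e x :
  loopless src tgt -> incident e x -> other_end e x != x.
Proof.
move=> /(_ e) loop_e; rewrite /incident /other_end.
by case: ifP => [/eqP <- _ | _ /= /eqP <-]; rewrite // eq_sym.
Qed.

Lemma adj_in_other_end F e x :
  e \in F -> incident e x -> adj F x (other_end e x).
Proof.
move=> eF ex; apply/adj_inP; exists e => //; move: ex; rewrite /incident /other_end.
by case: ifP => [/eqP -> _ | _ /= /eqP ->]; rewrite !eqxx ?orbT.
Qed.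

Lemma connect_other_endE F e x : incident e x ->
  connect (adj F) x (other_end e x) = connect (adj F) (src e) (tgt e).
Proof.
rewrite /incident /other_end; case: ifP => [/eqP -> // | _ /= /eqP ->].
exact: connect_adj_in_sym.
Qed.

Lemma connect_isolated F v y :
  (forall e, e \in F -> ~~ incident e v) -> connect (adj F) v y -> y = v.
Proof.
move=> Fv /connectP[[|x p] //= /andP[/adj_inP[e eF exy] _] _].
by move: (Fv e eF); rewrite /incident; case/orP: exy => /andP[/eqP -> /eqP ->]; rewrite eqxx ?orbT.
Qed.

Lemma forest_setU1_isolated F f v :
  loopless src tgt -> forest F -> (forall e, e \in F -> ~~ incident e v) ->
  incident f v -> forest (f |: F).
Proof.
move=> loopG forestF Fv fv; apply: forest_setU1 => //.
rewrite -(connect_other_endE _ fv); apply/negP => /(connect_isolated Fv) fv_eq.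
by move: (other_end_neq loopG fv); rewrite fv_eq eqxx.
Qed.

Lemma path_adj_in_setD1 F e w x p :
  incident e w -> w \notin x :: p -> path (adj F) x p -> path (adj (F :\ e)) x p.
Proof.
move=> ew; elim: p x => //= y p IHp x; rewrite inE negb_or => /andP[wx wyp].
case/andP=> /adj_inP[g gF gxy] yp; rewrite IHp // andbT; apply/adj_inP; exists g => //.
rewrite !inE gF andbT; apply/eqP => ge; subst g; move: ew wyp wx; rewrite /incident inE.
by case/orP: gxy => /andP[/eqP -> /eqP ->] /orP[] /eqP ->; rewrite eqxx.
Qed.

Lemma forest_tpath_through_other_end T e v w p :
  forest T -> e \in T -> incident e v ->
  connect (adj (T :\ e)) (other_end e v) w ->
  tpath src tgt T w v p -> other_end e v \in w :: p.
Proof.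
move=> /forall_inP forestT eT ev Cuw /and3P[Tp /eqP pv _]; apply/contraT => up.
have Cwv : connect (adj (T :\ e)) w v.
  apply/connectP; exists p => //.
  exact: path_adj_in_setD1 (incident_other_end e v) up Tp.
move: (forestT e eT); rewrite -(connect_other_endE _ ev) connect_adj_in_sym.
by rewrite (connect_trans Cuw Cwv).
Qed.

End Forests.

Theorem lemma4p2 (V E : finType) (src tgt : E -> V) (rho : V -> {perm E})
    (Hloop : loopless src tgt) (Hconn : gconnected src tgt)
    (Hrib : ribbon_structure src tgt rho)
    (v : V) (e1 e2 : E) (Hne : e1 != e2)
    (Hcomp : same_v_component src tgt v e1 e2) :
  let w1 := other_end src tgt e1 v in
  let w2 := other_end src tgt e2 v in
  exists T : {set E},
    [/\ spanning_tree src tgt T, e1 \in T, e2 \notin T &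
        forall p : seq V, tpath src tgt T w2 v p -> w1 \in w2 :: p].
Proof.
move=> w1 w2; case/and3P: Hcomp => e1v e2v w12.
have [T1 [forestT1 _ T1v T1conn]] :=
  forest_maximal_extension (forest0 src tgt) (sub0set [set e | ~~ incident src tgt e v]).
have {}T1v e : e \in T1 -> ~~ incident src tgt e v by move/(subsetP T1v); rewrite inE.
have e1T1 := contraL (T1v e1) e1v; have e2T1 := contraL (T1v e2) e2v.
have e1T1_e2 : e1 |: T1 \subset [set: E] :\ e2.
  by rewrite subsetD1 subsetT in_setU1 negb_or eq_sym Hne e2T1.
have [T [forestT e1T1T Te2 Tconn]] :=
  forest_maximal_extension (forest_setU1_isolated Hloop forestT1 T1v e1v) e1T1_e2.
have e1T : e1 \in T by rewrite (subsetP e1T1T) ?setU11.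
have w12T : connect (adj_in src tgt (T :\ e1)) w1 w2.
  apply: connect_adj_in_subset (connect_adj_in_sub T1conn (connect_adj_minus w12)).
  by rewrite subsetD1 e1T1 (subset_trans (subsetUr _ _) e1T1T).
exists T; split=> //; last 2 first.
- by apply/negP => /(subsetP Te2); rewrite !inE eqxx.
- by move=> p; apply: forest_tpath_through_other_end.
apply: forest_spanning_tree (sconnected_edges Hconn _) => // e.
have [-> | ne2] := eqVneq e e2; last by apply: Tconn; rewrite !inE ne2.
rewrite -(connect_other_endE _ e2v).
apply: connect_trans (connect1 (adj_in_other_end e1T e1v)) _.
exact: connect_adj_in_subset (subD1set T e1) w12T.
Qed.
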